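(* Let $k,m\in\mathbb{N}$ with $k>m$, $\frac{2k+1}{4m}<1$ and $\gcd(4m,2k+1)=1$. For $s=0,\dots,4m-1$ and $n=0,\dots,2k$ put $\widetilde X_{sn}=\frac{s}{4m}-\frac{n}{2k+1}$, $\widetilde\Phi_{sn}(0,0)=\sum_{l\in\mathbb{Z}}Q_2\big(2(l+\widetilde X_{sn})\big)$ with $Q_2(x)=(1-|x|)\chi_{[-1,1]}(x)$, and $\widetilde A_{sn}=\widetilde\Phi_{sn}(0,0)-\widetilde\Phi_{s,2k+1-n}(0,0)$ for $n=1,\dots,k$. Then (i) $\widetilde A_{0n}=\widetilde A_{2m,n}=0$ for $n=1,\dots,k$; (ii) $\widetilde A_{s,n}=-\widetilde A_{4m-s,n}$ for $s=1,\dots,2m-1$ and $n=1,\dots,k$.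
   Context: This corresponds to the Gabor system of $Q_2$ with $a=\frac{1}{2m}$, $b=\frac{2k+1}{2}$, $ab=\frac{2k+1}{4m}$. *)

From Stdlib Require Import Reals ZArith Arith Lra Lia.
From Coquelicot Require Import Coquelicot.
Open Scope R_scope.

Definition Q2 (x : R) : R :=
  if Rle_dec (Rabs x) 1 then 1 - Rabs x else 0.

(* Sum over l in Z, as the series sum_{n>=0} (f n + f (-(n+1))). *)
Definition sumZ (f : Z -> R) : R :=
  Series (fun n : nat => f (Z.of_nat n) + f (- Z.of_nat (S n))%Z).

Definition Xt (k m s n : nat) : R :=
  INR s / (4 * INR m) - INR n / (2 * INR k + 1).

Definition Phi0 (k m s n : nat) : R :=
  sumZ (fun l => Q2 (2 * (IZR l + Xt k m s n))).

Definition At (k m s n : nat) : R :=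
  Phi0 k m s n - Phi0 k m s (2 * k + 1 - n).

(** Write [G X = sum_l Q2 (2 (l + X))], so that [Phi0 k m s n = G (Xt k m s n)].
    Since [Q2 (2 y)] vanishes for [|y| >= 1/2], at most one term of the series is
    non-zero, which makes [G] both even and [1]-periodic.  Now
    [Xt (4m - s) n = - Xt s (2k+1-n)] and [Xt (s + 4m) n = Xt s n + 1], hence
    [A_(4m-s),n = - A_s,n]; for [s = 2m] this gives [A_2m,n = 0], and for [s = 0]
    periodicity gives [A_4m,n = A_0,n], so again [A_0,n = 0]. *)

From Stdlib Require Import Reals ZArith Arith Lra Lia.
From Coquelicot Require Import Coquelicot.
Open Scope R_scope.

Lemma Q2_opp (x : R) : Q2 (- x) = Q2 x.
Proof. unfold Q2. now rewrite Rabs_Ropp. Qed.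

Lemma Q2_double_out (y : R) : 1 / 2 <= Rabs y -> Q2 (2 * y) = 0.
Proof.
  intros Hy. unfold Q2. rewrite Rabs_mult, Rabs_pos_eq by lra.
  destruct (Rle_dec (2 * Rabs y) 1); lra.
Qed.

Lemma sumZ_single (f : Z -> R) (l0 : Z) :
  (forall l, l <> l0 -> f l = 0) -> sumZ f = f l0.
Proof.
  intros Hf. unfold sumZ.
  set (a := fun n : nat => f (Z.of_nat n) + f (- Z.of_nat (S n))%Z).
  (* [n0] is the index of the pair [(n, -(n+1))] containing [l0]. *)
  set (n0 := if Z.leb 0 l0 then Z.to_nat l0 else Z.to_nat (- l0 - 1)).
  assert (Ha : forall n, a n = if Nat.eqb n n0 then f l0 else 0).
  { intros n. unfold a.
    destruct (Nat.eqb_spec n n0) as [->|E]; unfold n0 in *; destruct (Z.leb_spec 0 l0).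
    - rewrite (Hf (- _)%Z) by lia. rewrite Z2Nat.id by lia. ring.
    - rewrite (Hf (Z.of_nat _)) by lia.
      replace (- Z.of_nat (S (Z.to_nat (- l0 - 1))))%Z with l0 by lia. ring.
    - rewrite !Hf by lia. ring.
    - rewrite !Hf by lia. ring. }
  assert (Hpartial : forall N, sum_n a N = if Nat.leb n0 N then f l0 else 0).
  { induction N as [|N IH].
    - rewrite sum_O, Ha.
      destruct (Nat.eqb_spec 0 n0), (Nat.leb_spec n0 0); easy || lia.
    - rewrite sum_Sn, IH, Ha.
      destruct (Nat.eqb_spec (S N) n0), (Nat.leb_spec n0 N), (Nat.leb_spec n0 (S N));
        try lia; cbn; ring. }
  assert (Hlim : is_lim_seq (sum_n a) (f l0)).
  { apply (is_lim_seq_ext_loc (fun _ => f l0)).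
    - exists n0. intros N HN. rewrite Hpartial. destruct (Nat.leb_spec n0 N); [easy | lia].
    - apply is_lim_seq_const. }
  exact (is_series_unique a (f l0) Hlim).
Qed.

Lemma exists_near_integer (X : R) : exists l : Z, -1 / 2 <= IZR l + X <= 1 / 2.
Proof.
  destruct (base_Int_part (X + 1 / 2)) as [H1 H2].
  exists (- Int_part (X + 1 / 2))%Z. rewrite opp_IZR. lra.
Qed.

Section Periodization.

Variable f : R -> R.
Hypothesis f_out : forall y, 1 / 2 <= Rabs y -> f y = 0.

Definition periodize (X : R) : R := sumZ (fun l => f (IZR l + X)).

Lemma periodize_eq (X : R) (l0 : Z) :
  -1 / 2 <= IZR l0 + X <= 1 / 2 -> periodize X = f (IZR l0 + X).
Proof.
  intros H0. apply (sumZ_single (fun l => f (IZR l + X))). intros l Hl.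
  apply f_out.
  destruct (Z.lt_total l l0) as [L|[L|L]]; [|contradiction|].
  - apply Zlt_le_succ, IZR_le in L. rewrite succ_IZR in L.
    rewrite Rabs_left1; lra.
  - apply Zlt_le_succ, IZR_le in L. rewrite succ_IZR in L.
    rewrite Rabs_pos_eq; lra.
Qed.

Lemma periodize_shift1 (X : R) : periodize (X + 1) = periodize X.
Proof.
  destruct (exists_near_integer X) as [l0 H0].
  rewrite (periodize_eq X l0 H0), (periodize_eq (X + 1) (l0 - 1)); rewrite minus_IZR.
  - f_equal. ring.
  - lra.
Qed.

Hypothesis f_even : forall y, f (- y) = f y.

Lemma periodize_opp (X : R) : periodize (- X) = periodize X.
Proof.
  destruct (exists_near_integer X) as [l0 H0].
  rewrite (periodize_eq X l0 H0), (periodize_eq (- X) (- l0)); rewrite opp_IZR.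
  - rewrite <- f_even. f_equal. ring.
  - lra.
Qed.

End Periodization.

Lemma Phi0_periodize (k m s n : nat) :
  Phi0 k m s n = periodize (fun y => Q2 (2 * y)) (Xt k m s n).
Proof. reflexivity. Qed.

Lemma Xt_add_period (k m s n : nat) :
  (0 < m)%nat -> Xt k m (s + 4 * m) n = Xt k m s n + 1.
Proof.
  intros Hm. apply lt_0_INR in Hm. unfold Xt.
  rewrite plus_INR, mult_INR. simpl. field.
  pose proof (pos_INR k). lra.
Qed.

Lemma Xt_reflect (k m s n : nat) :
  (0 < m)%nat -> (s <= 4 * m)%nat -> (n <= 2 * k + 1)%nat ->
  Xt k m (4 * m - s) n = - Xt k m s (2 * k + 1 - n).
Proof.
  intros Hm Hs Hn. apply lt_0_INR in Hm. unfold Xt.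
  rewrite !minus_INR, plus_INR, !mult_INR by assumption. simpl. field.
  pose proof (pos_INR k). lra.
Qed.

Lemma Phi0_period (k m s n : nat) :
  (0 < m)%nat -> Phi0 k m (s + 4 * m) n = Phi0 k m s n.
Proof.
  intros Hm. rewrite !Phi0_periodize, Xt_add_period by assumption.
  apply periodize_shift1, Q2_double_out.
Qed.

Lemma Phi0_reflect (k m s n : nat) :
  (0 < m)%nat -> (s <= 4 * m)%nat -> (n <= 2 * k + 1)%nat ->
  Phi0 k m (4 * m - s) n = Phi0 k m s (2 * k + 1 - n).
Proof.
  intros Hm Hs Hn. rewrite !Phi0_periodize, Xt_reflect by assumption.
  apply periodize_opp; [apply Q2_double_out|].
  intros y. rewrite <- Q2_opp. f_equal. ring.
Qed.

Lemma At_reflect (k m s n : nat) :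
  (0 < m)%nat -> (s <= 4 * m)%nat -> (n <= 2 * k + 1)%nat ->
  At k m (4 * m - s) n = - At k m s n.
Proof.
  intros Hm Hs Hn. unfold At.
  rewrite !Phi0_reflect by lia.
  replace (2 * k + 1 - (2 * k + 1 - n))%nat with n by lia. ring.
Qed.

Lemma At_0 (k m n : nat) :
  (0 < m)%nat -> (n <= 2 * k + 1)%nat -> At k m 0 n = 0.
Proof.
  intros Hm Hn.
  assert (Hperiod : At k m (4 * m) n = At k m 0 n)
    by (unfold At; now rewrite <- !(Phi0_period k m 0) by assumption).
  pose proof (At_reflect k m 0 n Hm (Nat.le_0_l _) Hn) as Hrefl.
  rewrite Nat.sub_0_r, Hperiod in Hrefl. lra.
Qed.

Lemma At_half (k m n : nat) :
  (0 < m)%nat -> (n <= 2 * k + 1)%nat -> At k m (2 * m) n = 0.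
Proof.
  intros Hm Hn. pose proof (At_reflect k m (2 * m) n Hm ltac:(lia) Hn) as Hrefl.
  replace (4 * m - 2 * m)%nat with (2 * m)%nat in Hrefl by lia. lra.
Qed.

Theorem lemma3p15 (k m : nat) :
  (m < k)%nat ->
  (2 * k + 1 < 4 * m)%nat ->
  Nat.gcd (4 * m) (2 * k + 1) = 1%nat ->
  (forall n : nat, (1 <= n <= k)%nat ->
     At k m 0 n = 0 /\ At k m (2 * m) n = 0) /\
  (forall s n : nat, (1 <= s <= 2 * m - 1)%nat -> (1 <= n <= k)%nat ->
     At k m s n = - At k m (4 * m - s) n).
Proof.
  intros _ Hkm _.
  assert (Hm : (0 < m)%nat) by lia.
  split.
  - intros n Hn. split; [apply At_0 | apply At_half]; lia.
  - intros s n Hs Hn. rewrite At_reflect by lia. ring.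
Qed.
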